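(* Let $C\subseteq 2^X$ be an ample class with a representation map $r$, let $B$ be a cube of $2^X$ and $Y\subseteq X$. Then: (1) $r_B:C\cap B\to X(C\cap B)$, $r_B(c)=r(c)\cap\mathrm{supp}(B)$, is a representation map for $C\cap B$; (2) $r^Y:C^Y\to X(C^Y)$ is a representation map for $C^Y$, where for $c\in C^Y$, letting $B_c$ be the unique cube of $C$ with support $Y$ and tag $c$ and $c^{B_c}$ the unique concept of $B_c$ with $r(c^{B_c})\cap Y=Y$, we set $r^Y(c)=r(c^{B_c})\setminus Y$; (3) $r_Y:C_Y\to X(C_Y)$ is a representation map for $C_Y$, where for $c\in C_Y$, letting $B_c$ be the unique cube of $2^X$ with support $Y$ and tag $c$ and $c_{B_c}$ the unique concept of $C\cap B_c$ with $r(c_{B_c})\cap Y=\varnothing$, we set $r_Y(c)=r(c_{B_c})$.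
   Context: Concepts are subsets of the finite set $X$, identified with characteristic functions; $c|Y$ is restriction and $C|Y=\{c|Y:c\in C\}$. $Y$ is shattered by $C$ if $C|Y=2^Y$. A cube of $2^X$ is $\{T\cup Z:Z\subseteq Y\}$ with $Y\subseteq X$ its support $\mathrm{supp}$ and $T\subseteq X\setminus Y$ its tag; a cube of $C$ is one contained in $C$. $C$ is ample if every shattered set is the support of a cube of $C$; $X(C)$ is the family of shattered sets. $C_Y=C|(X\setminus Y)$ (restriction) and the reduction $C^Y$ is the class on $X\setminus Y$ consisting of the tags of all cubes of $C$ with support $Y$; $C\cap B$, $C_Y$, $C^Y$ are ample when $C$ is. A representation map for an ample class $E$ is a bijection $r:E\to X(E)$ with $c|(r(c)\cup r(c'))\ne c'|(r(c)\cup r(c'))$ for all distinct $c,c'\in E$. (For a representation map $r$ of $C$, the concepts $c^{B_c}$ and $c_{B_c}$ above exist and are unique.) *)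

From mathcomp Require Import all_boot.
Set Implicit Arguments. Unset Strict Implicit. Unset Printing Implicit Defensive.

Section Defs.
Variable X : finType.
Implicit Types (C E : {set {set X}}) (c Y T S : {set X}).

Definition shatters C Y : bool := [set c :&: Y | c in C] == powerset Y.

Definition shattered_sets C : {set {set X}} := [set Y | shatters C Y].

Definition cube Y T : {set {set X}} := [set T :|: Z | Z in powerset Y].

Definition is_cube_of C Y T : bool := [disjoint T & Y] && (cube Y T \subset C).

Definition ample C : Prop := forall Y, shatters C Y -> exists T, is_cube_of C Y T.

(* C_Y = C|(X \ Y), encoded as a class of subsets of X \ Y *)
Definition restriction C Y : {set {set X}} := [set c :&: ~: Y | c in C].

(* C^Y : tags of all cubes of C with support Y (subsets of X \ Y) *)
Definition reduction C Y : {set {set X}} := [set T | is_cube_of C Y T].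

(* r is a representation map for E: a bijection E -> X(E) with the
   non-clashing condition. Only the values of r on E matter. *)
Definition is_repmap E (r : {set X} -> {set X}) : Prop :=
  [/\ {in E &, injective r},
      [set r c | c in E] = shattered_sets E &
      {in E &, forall c c', c != c' ->
          c :&: (r c :|: r c') != c' :&: (r c :|: r c')}].

Definition rup (r : {set X} -> {set X}) Y c : {set X} :=
  if [pick d in cube Y c | r d :&: Y == Y] is Some d then r d :\: Y else set0.

Definition rdown C (r : {set X} -> {set X}) Y c : {set X} :=
  if [pick d in C :&: cube Y c | r d :&: Y == set0] is Some d then r d else set0.

End Defs.

From mathcomp Require Import all_boot zify.
Set Implicit Arguments. Unset Strict Implicit. Unset Printing Implicit Defensive.

(* Everything rests on a counting characterisation of representation maps.
   By Pajor's lemma (a class shatters at least as many sets as it has concepts),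
   a non-clashing map s on D satisfies #|{d | s d ⊆ W}| <= #|{A ∈ X(D) | A ⊆ W}|
   for every W, because d |-> d ∩ W is injective on {d | s d ⊆ W}; when equality
   holds for all W, Möbius inversion over the subsets of W shows that every fibre
   of s is a singleton over X(D) and empty elsewhere, i.e. s is a representation
   map.  A representation map r of C attains equality, and Pajor's splitting
   inequality along a coordinate x forces both halves {c | x ∈ c} and {c | x ∉ c}
   to attain it for c |-> r c \ x.  Peeling off the coordinates outside S one at a
   time gives (1).  For (3), the same counting shows that d |-> d \ Y is a
   bijection from {d ∈ C | r d ∩ Y = ∅} onto C_Y.  For (2), applying (1) to the
   cube with support r c through c shows that this cube lies in C; with
   ampleness this identifies the sets shattered by C^Y with the R \ Y for R ⊇ Y
   shattered by C, while (1) makes the lift c^{B_c} unique. *)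

Section RepresentationMaps.
Variable X : finType.
Implicit Types (C D E : {set {set X}}) (c d e A P R S T W Y Z : {set X}) (x : X) (b : bool).
Implicit Types (r s : {set X} -> {set X}).

Definition trace D W := [set d :&: W | d in D].

Definition shattered_sub D W := [set A in shattered_sets D | A \subset W].

Definition slice D x b := [set d in D | (x \in d) == b].

Definition non_clashing E s :=
  {in E &, forall c c', c != c' -> c :&: (s c :|: s c') != c' :&: (s c :|: s c')}.

Lemma shattersP D Y :
  reflect (forall Z, Z \subset Y -> exists2 d, d \in D & d :&: Y = Z) (shatters D Y).
Proof.
apply: (iffP eqP) => [shY Z sZY|shY].
  have : Z \in powerset Y by rewrite inE.
  by rewrite -shY => /imsetP[d dD ->]; exists d.
apply/setP => Z; rewrite inE; apply/imsetP/idP => [[d _ ->]|/shY[d dD <-]].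
  exact: subsetIr.
by exists d.
Qed.

Lemma shattersS D D' Y : D \subset D' -> shatters D Y -> shatters D' Y.
Proof.
move=> sDD' /shattersP shY; apply/shattersP => Z /shY[d dD <-].
by exists d => //; apply: (subsetP sDD').
Qed.

Lemma shatters_trace D W Y : shatters (trace D W) Y = (Y \subset W) && shatters D Y.
Proof.
apply/shattersP/andP => [shY|[sYW /shattersP shY]].
  have sYW : Y \subset W.
    have [_ /imsetP[e _ ->] <-] := shY Y (subxx Y).
    exact: subset_trans (subsetIl _ _) (subsetIr _ _).
  split=> //; apply/shattersP => Z /shY [_ /imsetP[e eD ->] <-].
  by exists e => //; rewrite -setIA (setIidPr sYW).
move=> Z /shY[d dD <-]; exists (d :&: W); first exact: imset_f.
by rewrite -setIA (setIidPr sYW).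
Qed.

Lemma shattered_sets_trace D W : shattered_sets (trace D W) = shattered_sub D W.
Proof. by apply/setP => A; rewrite !inE shatters_trace andbC. Qed.

Lemma slice_sub D x b : slice D x b \subset D.
Proof. by apply/subsetP => d; rewrite inE => /andP[]. Qed.

Lemma card_slices D x : #|slice D x false| + #|slice D x true| = #|D|.
Proof.
rewrite -(cardsID [set d : {set X} | x \in d] D) addnC.
by congr (_ + _); congr #|pred_of_set _|; apply/setP => d; rewrite !inE;
  case: (x \in d); rewrite ?andbT ?andbF.
Qed.

Lemma notin_shattered_slice D x b A : shatters (slice D x b) A -> x \notin A.
Proof.
move=> /shattersP shA; apply/negP => xA.
have [d] := shA set0 (sub0set _); rewrite inE => /andP[_ /eqP xdb] /setP/(_ x).
have [d'] := shA A (subxx _); rewrite inE => /andP[_ /eqP xd'b] /setP/(_ x).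
by rewrite !inE xA !andbT xdb xd'b => ->.
Qed.

Lemma shatters_setU1_slices D x A :
  shatters (slice D x false) A -> shatters (slice D x true) A -> shatters D (x |: A).
Proof.
move=> sh0 sh1; apply/shattersP => Z sZxA.
have sZA : Z :\ x \subset A by rewrite subDset.
have /shattersP/(_ _ sZA)[d] : shatters (slice D x (x \in Z)) A by case: (x \in Z).
rewrite inE => /andP[dD /eqP xdZ] dA; exists d => //.
apply/setP => y; rewrite !inE; have [->|nyx] := eqVneq y x.
  by rewrite /= andbT.
by move/setP/(_ y): dA; rewrite !inE nyx.
Qed.

(** * Pajor's lemma *)

Lemma card_shattered_sub_slices D x W :
  #|shattered_sub (slice D x false) W| + #|shattered_sub (slice D x true) W|
    <= #|shattered_sub D (x |: W)|.
Proof.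
set U0 := shattered_sub _ W; set U1 := shattered_sub _ W.
have x_notin b A : A \in shattered_sub (slice D x b) W -> x \notin A.
  by rewrite !inE => /andP[/notin_shattered_slice].
set J := [set x |: A | A in U0 :&: U1].
have card_J : #|J| = #|U0 :&: U1|.
  apply: card_in_imset => A B /setIP[/x_notin xA _] /setIP[/x_notin xB _] eqAB.
  by rewrite -(setU1K xA) eqAB setU1K.
have disj_J : [disjoint U0 :|: U1 & J].
  rewrite disjoints_subset; apply/subsetP => A /setUP[]/x_notin xA;
  by rewrite inE; apply: contra xA => /imsetP[B _ ->]; rewrite setU11.
have card_UJ : #|U0 :|: U1 :|: J| = #|U0 :|: U1| + #|J|.
  by apply/eqP; rewrite (leq_card_setU _ _).2.
rewrite -cardsUI -card_J -card_UJ.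
apply: subset_leq_card; apply/subsetP => A; rewrite inE => /orP[|].
  case/setUP; rewrite !inE => /andP[shA sAW];
  by rewrite (shattersS (slice_sub _ _ _) shA) (subset_trans sAW) ?subsetUr.
case/imsetP=> B /setIP[]; rewrite !inE => /andP[sh0 sBW] /andP[sh1 _] ->.
by rewrite shatters_setU1_slices // setUS.
Qed.

Lemma shattered_sub_setT D : shattered_sub D setT = shattered_sets D.
Proof. by apply/setP => A; rewrite !inE subsetT andbT. Qed.

Lemma card_le_shattered D : #|D| <= #|shattered_sets D|.
Proof.
have [n] := ubnP #|D|; elim: n D => // n IH D ltDn.
have [le1|] := leqP #|D| 1.
  have [->|[d dD]] := set_0Vmem D; first by rewrite cards0.
  apply: leq_trans le1 _; rewrite card_gt0; apply/set0Pn; exists set0.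
  by rewrite inE; apply/shattersP => Z; rewrite subset0 => /eqP ->; exists d; rewrite ?setI0.
case/card_gt1P => d [d' [dD d'D ndd']].
have [x xdd'] : exists x, (x \in d) != (x \in d').
  apply/existsP; apply: contraNT ndd' => /existsPn same.
  by apply/eqP/setP => y; apply/eqP/negbNE/same.
have slice_gt0 b : 0 < #|slice D x b|.
  apply/card_gt0P; have [xdb|xdb] := eqVneq (x \in d) b.
    by exists d; rewrite inE dD xdb eqxx.
  exists d'; rewrite inE d'D /=; move: xdd' xdb.
  by case: b (x \in d) (x \in d') => [] [] [].
have slice_lt b : #|slice D x b| < n.
  by move: ltDn (slice_gt0 (~~ b)); rewrite -(card_slices D x); case: b => /=; lia.
have := card_shattered_sub_slices D x setT.
rewrite setUT !shattered_sub_setT -(card_slices D x).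
by move: (IH _ (slice_lt false)) (IH _ (slice_lt true)); lia.
Qed.

Lemma card_trace_le D W : #|trace D W| <= #|shattered_sub D W|.
Proof. by rewrite -shattered_sets_trace card_le_shattered. Qed.

(** * Counting characterisation of representation maps *)

Lemma non_clashing_trace_inj D s W : non_clashing D s ->
  {in [set d in D | s d \subset W] &, injective (fun d => d :&: W)}.
Proof.
move=> ncl d d' /setIdP[dD sdW] /setIdP[d'D sd'W] eqdW.
apply/eqP/negPn/negP => /(ncl _ _ dD d'D)/negP; apply.
have sUW : s d :|: s d' \subset W by rewrite subUset sdW sd'W.
by rewrite -(setIidPr sUW) !setIA eqdW.
Qed.

Lemma card_rep_sub_le D s W : non_clashing D s ->
  #|[set d in D | s d \subset W]| <= #|shattered_sub D W|.
Proof.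
move=> ncl; rewrite -(card_in_imset (non_clashing_trace_inj (W := W) ncl)).
apply: leq_trans (card_trace_le D W); apply/subset_leq_card/imsetS.
by apply/subsetP => d; rewrite inE => /andP[].
Qed.

Lemma eq_subset_sums (f g : {set X} -> nat) :
  (forall Z, \sum_(Z' : {set X} | Z' \subset Z) f Z' =
             \sum_(Z' : {set X} | Z' \subset Z) g Z') -> f =1 g.
Proof.
move=> eq_sums Z; have [n] := ubnP #|Z|; elim: n Z => // n IH Z ltZn.
have := eq_sums Z; rewrite (bigD1 Z) //= [in RHS](bigD1 Z) //=.
rewrite (eq_bigr g) => [/addIn //|Z' /andP[sZ'Z neZ'Z]].
by apply/IH/leq_trans/ltZn/proper_card; rewrite properEneq neZ'Z.
Qed.

Lemma is_repmap_of_card D s : non_clashing D s ->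
  (forall W, #|shattered_sub D W| <= #|[set d in D | s d \subset W]|) -> is_repmap D s.
Proof.
move=> ncl le_sh.
pose fibre Z := [set d in D | s d == Z].
have card_fibre Z : #|fibre Z| = (Z \in shattered_sets D).
  apply: (@eq_subset_sums (fun Z => #|fibre Z|) (fun Z => Z \in shattered_sets D)) => {}Z.
  have <- : #|[set d in D | s d \subset Z]| = \sum_(Z' : {set X} | Z' \subset Z) #|fibre Z'|.
    rewrite -sum1_card (partition_big s (fun Z' => Z' \subset Z)) => [|d]; last first.
      by rewrite inE => /andP[].
    apply: eq_bigr => Z' sZ'Z; rewrite -sum1_card; apply: eq_bigl => d.
    by rewrite !inE; case: eqP => [->|]; rewrite ?sZ'Z ?andbT ?andbF.
  have <- : #|shattered_sub D Z| =
            \sum_(Z' : {set X} | Z' \subset Z) (Z' \in shattered_sets D : nat).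
    rewrite -sum1_card big_mkcond [RHS]big_mkcond; apply: eq_bigr => A _.
    by rewrite !inE andbC; case: (A \subset Z); case: (A \in shattered_sets D).
  by apply/eqP; rewrite eqn_leq le_sh card_rep_sub_le.
have rep_shattered d : d \in D -> s d \in shattered_sets D.
  move=> dD; apply: contraT => /negbTE notsh.
  have /eqP := card_fibre (s d); rewrite notsh cards_eq0 => /eqP/setP/(_ d).
  by rewrite !inE dD eqxx.
have fibre_single Z : Z \in shattered_sets D -> exists d, fibre Z = [set d].
  by move=> shZ; apply/cards1P; rewrite card_fibre shZ.
split=> //.
- move=> d d' dD d'D eqsd; have [e fibre_e] := fibre_single _ (rep_shattered d dD).
  have : d \in fibre (s d) by rewrite inE dD eqxx.
  have : d' \in fibre (s d) by rewrite inE d'D eqsd eqxx.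
  by rewrite fibre_e !inE => /eqP -> /eqP ->.
apply/setP => A; apply/imsetP/idP => [[d dD ->]|/fibre_single[e fibre_e]].
  exact: rep_shattered.
have : e \in fibre A by rewrite fibre_e set11.
by rewrite inE => /andP[eD /eqP <-]; exists e.
Qed.

Lemma card_repmap_sub C r W :
  is_repmap C r -> #|[set c in C | r c \subset W]| = #|shattered_sub C W|.
Proof.
case=> r_inj r_img _; rewrite -(card_in_imset (sub_in2 _ r_inj)); last first.
  by move=> c; rewrite inE => /andP[].
congr #|pred_of_set _|; apply/setP => A; apply/imsetP/idP => [[c]|].
  by move=> /setIdP[cC rcW] ->; rewrite inE -r_img rcW imset_f.
rewrite inE -r_img => /andP[/imsetP[c cC ->] rcW]; exists c => //.
by rewrite inE cC.
Qed.

Lemma shatters_repmap E r c : is_repmap E r -> c \in E -> shatters E (r c).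
Proof. by case=> _ r_img _ cE; have := imset_f r cE; rewrite r_img inE. Qed.

Lemma repmap_onto E r A : is_repmap E r -> shatters E A -> exists2 c, c \in E & A = r c.
Proof. by case=> _ r_img _ shA; apply/imsetP; rewrite r_img inE. Qed.

Lemma mem_cube S T c : [disjoint T & S] -> (c \in cube S T) = (c :\: S == T).
Proof.
move=> dTS; apply/imsetP/eqP => [[Z]|<-].
  rewrite powersetE => sZS ->; rewrite setDUl (setDidPl dTS).
  by move: sZS; rewrite -setD_eq0 => /eqP ->; rewrite setU0.
by exists (c :&: S); rewrite ?powersetE ?subsetIr // setUC setID.
Qed.

Lemma disjoint_setD A B : [disjoint A :\: B & B].
Proof. by rewrite disjoints_subset setDE subsetIr. Qed.

Lemma disjoint_setD1_setU1 S T x : [disjoint T & S] -> [disjoint T :\ x & x |: S].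
Proof.
rewrite !disjoints_subset => /subsetP sTS; apply/subsetP => y.
by rewrite !inE negb_or => /andP[-> /sTS]; rewrite inE.
Qed.

Lemma mem_cube_setU1 S T c x : x \notin S -> [disjoint T & S] ->
  (c \in cube S T) = (c \in cube (x |: S) (T :\ x)) && ((x \in c) == (x \in T)).
Proof.
move=> xS dTS; rewrite !mem_cube ?disjoint_setD1_setU1 //.
apply/eqP/andP => [<-|[/eqP eqT' /eqP eqx]].
  by rewrite setDDl setUC inE xS /=; split; exact: eqxx.
apply/setP => y; rewrite inE; have [->|nyx] := eqVneq y x.
  by rewrite xS eqx.
by move/setP/(_ y): eqT'; rewrite !inE (negbTE nyx).
Qed.

Lemma cube_sub_cube Y R T T' : Y \subset R -> T' \in cube R T -> cube Y T' \subset cube R T.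
Proof.
move=> sYR /imsetP[Z]; rewrite powersetE => sZR ->.
apply/subsetP => c /imsetP[Q]; rewrite powersetE => sQY ->.
by rewrite -setUA imset_f // powersetE subUset sZR (subset_trans sQY).
Qed.

Lemma cube_shatters S T : [disjoint T & S] -> shatters (cube S T) S.
Proof.
move=> dTS; apply/shattersP => Z sZS; exists (T :|: Z); first by rewrite imset_f ?powersetE.
by move: dTS; rewrite -setI_eq0 setIUl (setIidPl sZS) => /eqP ->; rewrite set0U.
Qed.

Lemma cube_sub_of_shatters E S T : [disjoint T & S] ->
  E \subset cube S T -> shatters E S -> cube S T \subset E.
Proof.
move=> dTS /subsetP sEc /shattersP shS; apply/subsetP => c cSc.
have [e eE eSc] := shS (c :&: S) (subsetIr _ _).
have := sEc e eE; rewrite !mem_cube // in cSc * => eST.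
suff -> : c = e by [].
by rewrite -(setID c S) -(setID e S) eSc (eqP cSc) (eqP eST).
Qed.

(** * Representation maps of subcubes *)

Lemma eq_in_is_repmap E r r' : {in E, r =1 r'} -> is_repmap E r -> is_repmap E r'.
Proof.
move=> eq_rr' [r_inj r_img ncl]; split.
- by move=> c c' cE c'E; rewrite -!eq_rr' //; apply: r_inj.
- by rewrite -r_img; apply: eq_in_imset => c cE; rewrite eq_rr'.
by move=> c c' cE c'E; rewrite -!eq_rr' //; apply: ncl.
Qed.

Lemma is_repmap_slice C r x b :
  is_repmap C r -> is_repmap (slice C x b) (fun c => r c :\ x).
Proof.
move=> rep; have [_ _ ncl] := rep.
have ncl_slice b' : non_clashing (slice C x b') (fun c => r c :\ x).
  move=> d d'; rewrite !inE => /andP[dC /eqP xd] /andP[d'C /eqP xd'] ndd'.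
  apply: contra (ncl _ _ dC d'C ndd') => /eqP eqd; apply/eqP/setP => y.
  rewrite !inE; have [->|nyx] := eqVneq y x; first by rewrite xd xd'.
  by move/setP/(_ y): eqd; rewrite !inE nyx.
apply: is_repmap_of_card => // W.
have sub_slice b' : [set d in slice C x b' | r d :\ x \subset W]
                  = slice [set d in C | r d \subset x |: W] x b'.
  by apply/setP => d; rewrite !inE subDset andbAC.
have := card_slices [set d in C | r d \subset x |: W] x.
rewrite -!sub_slice (card_repmap_sub _ rep).
have := card_shattered_sub_slices C x W.
have := card_rep_sub_le W (ncl_slice false); have := card_rep_sub_le W (ncl_slice true).
by case: b; lia.
Qed.

Lemma is_repmap_cube C r S T : is_repmap C r -> [disjoint T & S] ->
  is_repmap (C :&: cube S T) (fun c => r c :&: S).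
Proof.
move=> rep; have [n] := ubnP #|~: S|; elim: n S T => // n IH S T ltSn dTS.
have [S0|[x]] := set_0Vmem (~: S).
  have ST : S = setT by rewrite -(setCK S) S0 setC0.
  have -> : C :&: cube S T = C.
    apply/setIidPl/subsetP => c _; rewrite mem_cube // ST setDT eq_sym -subset0.
    by move: dTS; rewrite ST disjoints_subset setCT.
  by apply: eq_in_is_repmap rep => c _; rewrite ST setIT.
rewrite inE => xS.
have ltxSn : #|~: (x |: S)| < n.
  by apply/leq_trans/ltSn/proper_card; rewrite properC properUr // sub1set.
have := is_repmap_slice x (x \in T) (IH _ _ ltxSn (disjoint_setD1_setU1 x dTS)).
have -> : slice (C :&: cube (x |: S) (T :\ x)) x (x \in T) = C :&: cube S T.
  by apply/setP => c; rewrite !inE (mem_cube_setU1 _ xS dTS) andbA.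
apply: eq_in_is_repmap => c _; apply/setP => y; rewrite !inE.
by have [->|] := eqVneq y x; rewrite ?(negbTE xS) ?andbF.
Qed.

Lemma cube_rep_subset C r c : is_repmap C r -> c \in C -> cube (r c) (c :\: r c) \subset C.
Proof.
move=> rep cC; have dcr := disjoint_setD c (r c).
have cB : c \in C :&: cube (r c) (c :\: r c) by rewrite inE cC mem_cube ?eqxx.
have := shatters_repmap (is_repmap_cube rep dcr) cB; rewrite setIid => shB.
exact: subset_trans (cube_sub_of_shatters dcr (subsetIr _ _) shB) (subsetIl _ _).
Qed.

Lemma eq_of_setD_rep_setI C r S d d' : is_repmap C r -> d \in C -> d' \in C ->
  d :\: S = d' :\: S -> r d :&: S = r d' :&: S -> d = d'.
Proof.
move=> rep dC d'C eqdS; have [r_inj _ _] := is_repmap_cube rep (disjoint_setD d S).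
by apply: r_inj; rewrite inE ?dC ?d'C mem_cube ?disjoint_setD ?eqdS ?eqxx.
Qed.

(** * Restrictions *)

Lemma restriction_rep_witness C r Y c : is_repmap C r -> c \in restriction C Y ->
  exists d, [/\ d \in C, r d \subset ~: Y, d :&: ~: Y = c & rdown C r Y c = r d].
Proof.
move=> rep cCY; have [_ _ ncl] := rep.
pose R := [set d in C | r d \subset ~: Y].
have trace_R : [set d :&: ~: Y | d in R] = restriction C Y.
  apply/eqP; rewrite eqEcard; apply/andP; split.
    by apply/imsetS/subsetP => d; rewrite inE => /andP[].
  rewrite (card_in_imset (non_clashing_trace_inj ncl)) card_repmap_sub //.
  exact: card_trace_le.
have dcY : [disjoint c & Y].
  by move: cCY => /imsetP[e _ ->]; rewrite disjoints_subset subsetIr.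
have in_cube d : (d \in cube Y c) = (d :&: ~: Y == c) by rewrite mem_cube // setDE.
rewrite /rdown; case: pickP => [d /andP[/setIP[dC]]|no_pick].
  rewrite in_cube setI_eq0 disjoints_subset => /eqP <- rdY.
  by exists d.
move: cCY; rewrite -trace_R => /imsetP[d /setIdP[dC rdY] cE].
move: (no_pick d); rewrite inE dC in_cube -cE eqxx /=.
by rewrite setI_eq0 disjoints_subset rdY.
Qed.

Lemma is_repmap_restriction C r Y :
  is_repmap C r -> is_repmap (restriction C Y) (rdown C r Y).
Proof.
move=> rep; have [r_inj _ ncl] := rep.
have trace_inj := non_clashing_trace_inj (W := ~: Y) ncl.
split.
- move=> c c' /(restriction_rep_witness rep)[d [dC _ <- ->]].
  by move=> /(restriction_rep_witness rep)[d' [d'C _ <- ->]] /r_inj-> .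
- apply/setP => A; rewrite inE; apply/imsetP/idP => [[c]|].
    move=> /(restriction_rep_witness rep)[d [dC rdY _ ->]] ->.
    by rewrite shatters_trace rdY (shatters_repmap rep).
  rewrite shatters_trace => /andP[AY /(repmap_onto rep)[d dC eA]].
  have dYCY : d :&: ~: Y \in restriction C Y by exact: imset_f.
  exists (d :&: ~: Y) => //.
  have [d' [d'C rd'Y eqdd' ->]] := restriction_rep_witness rep dYCY.
  by rewrite eA (trace_inj d' d) // inE ?d'C ?dC -?eA.
move=> c c' /(restriction_rep_witness rep)[d [dC rdY <- ->]].
move=> /(restriction_rep_witness rep)[d' [d'C rd'Y <- ->]] ncc'.
have sUY : r d :|: r d' \subset ~: Y by rewrite subUset rdY rd'Y.
rewrite -!setIA (setIidPr sUY); apply: ncl => //.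
by apply: contraNneq ncc' => ->.
Qed.

(** * Reductions *)

Lemma reduction_rep_witness C r Y T : is_repmap C r -> T \in reduction C Y ->
  exists d, [/\ d \in C, d :\: Y = T, Y \subset r d & rup r Y T = r d :\: Y].
Proof.
move=> rep; rewrite inE => /andP[dTY /subsetP sBC].
have CB : C :&: cube Y T = cube Y T by apply/setIidPr/subsetP.
have := cube_shatters dTY; rewrite -CB => /(repmap_onto (is_repmap_cube rep dTY)).
move=> [d dB eY]; rewrite /rup; case: pickP => [d' /andP[d'B /eqP rd'Y]|no_pick].
  exists d'; split=> //; first exact: sBC.
    by apply/eqP; rewrite -mem_cube.
  by rewrite -rd'Y subsetIl.
by move: (no_pick d); rewrite -CB dB /= -eY eqxx.
Qed.

Lemma shatters_reduction C Y R : ample C -> shatters C R -> Y \subset R ->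
  shatters (reduction C Y) (R :\: Y).
Proof.
move=> amp shR sYR; have [T /andP[dTR sBC]] := amp R shR.
have sZR Z : Z \subset R :\: Y -> Z \subset R by move/subset_trans; apply; apply: subsetDl.
apply/shattersP => Z sZRY; exists (T :|: Z).
  rewrite inE; apply/andP; split.
    rewrite disjoints_subset subUset -!disjoints_subset (disjointWr sYR dTR).
    by have /subsetDP[] := sZRY.
  by apply: subset_trans sBC; apply: cube_sub_cube sYR _; rewrite imset_f // powersetE sZR.
rewrite setIUl (setIidPl sZRY) (_ : T :&: _ = set0) ?set0U //.
by apply/disjoint_setI0/(disjointWr _ dTR)/subsetDl.
Qed.

Lemma shatters_of_reduction C Y Z :
  shatters (reduction C Y) Z -> [disjoint Z & Y] /\ shatters C (Y :|: Z).
Proof.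
move=> /shattersP shZ; split.
  have [T] := shZ Z (subxx Z); rewrite inE => /andP[dTY _] <-.
  exact: disjointWl (subsetIl _ _) dTY.
apply/shattersP => P sPYZ.
have [T] := shZ (P :&: Z) (subsetIr _ _); rewrite inE => /andP[dTY sBC] TZ.
exists (T :|: (P :&: Y)); first by apply: (subsetP sBC); rewrite imset_f // powersetE subsetIr.
move: dTY; rewrite -setI_eq0 => /eqP TY0.
have PYZ_PZ : P :&: Y :&: Z \subset P :&: Z by rewrite -setIA setIS ?subsetIr.
rewrite setIUr !setIUl TY0 TZ set0U -setIA setIid (setUidPl PYZ_PZ).
by rewrite -setIUr (setIidPl sPYZ).
Qed.

Lemma is_repmap_reduction C r Y :
  ample C -> is_repmap C r -> is_repmap (reduction C Y) (rup r Y).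
Proof.
move=> amp rep; have [r_inj _ _] := rep.
have rep_setI d : Y \subset r d -> r d :&: Y = Y by move/setIidPr.
split.
- move=> T T' /(reduction_rep_witness rep)[d [dC <- Yd ->]].
  move=> /(reduction_rep_witness rep)[d' [d'C <- Yd' ->]] eqdY.
  have eqrd : r d = r d' by rewrite -(setID (r d) Y) -(setID (r d') Y) !rep_setI // eqdY.
  by rewrite (r_inj _ _ dC d'C eqrd).
- apply/setP => Z; apply/imsetP/idP => [[T /(reduction_rep_witness rep)[d [dC _ Yd ->]] ->]|].
    by rewrite inE shatters_reduction // (shatters_repmap rep).
  rewrite inE => /shatters_of_reduction[dZY /(repmap_onto rep)[d dC eYZ]].
  have Yd : Y \subset r d by rewrite -eYZ subsetUl.
  have dYB : d :\: Y \in cube (r d) (d :\: r d).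
    by rewrite mem_cube ?disjoint_setD // setDDl (setUidPr Yd).
  have dYCY : d :\: Y \in reduction C Y.
    rewrite inE; apply/andP; split; first exact: disjoint_setD.
    exact: subset_trans (cube_sub_cube Yd dYB) (cube_rep_subset rep dC).
  exists (d :\: Y) => //.
  have [d' [d'C eqdY Yd' ->]] := reduction_rep_witness rep dYCY.
  rewrite (eq_of_setD_rep_setI rep d'C dC eqdY) ?rep_setI // -eYZ setDUl setDv set0U.
  by apply/esym/setDidPl.
move=> T T' /(reduction_rep_witness rep)[d [dC <- Yd ->]].
move=> /(reduction_rep_witness rep)[d' [d'C <- Yd' ->]].
rewrite -setDUl; set U := (r d :|: r d') :\: Y.
(* d and d' agree outside U, and both representatives meet ~: U exactly in Y. *)
apply: contraNneq => eqU; suff -> : d = d' by [].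
have UY : U \subset ~: Y by rewrite /U setDE subsetIr.
apply: (eq_of_setD_rep_setI (S := ~: U) rep dC d'C).
  by move: eqU; rewrite !setDE setCK -!setIA (setIidPr UY).
have rep_offU d0 : Y \subset r d0 -> r d0 \subset r d :|: r d' -> r d0 :&: ~: U = Y.
  move=> Yd0; rewrite -setD_eq0 => /eqP d0U0.
  by rewrite /U setCD setIUr -setDE d0U0 set0U rep_setI.
by rewrite !rep_offU // ?subsetUl ?subsetUr.
Qed.

End RepresentationMaps.

Theorem proposition6p6 (X : finType) (C : {set {set X}})
    (r : {set X} -> {set X}) :
  ample C -> is_repmap C r ->
  [/\ (* (1) for every cube B = cube S T of 2^X (support S, tag T ⊆ X \ S) *)
      (forall S T : {set X}, [disjoint T & S] ->
         is_repmap (C :&: cube S T) (fun c => r c :&: S)),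
      (* (2) *)
      (forall Y : {set X}, is_repmap (reduction C Y) (rup r Y)) &
      (* (3) *)
      (forall Y : {set X}, is_repmap (restriction C Y) (rdown C r Y))].
Proof.
move=> amp rep; split => [S T|Y|Y].
- exact: is_repmap_cube.
- exact: is_repmap_reduction.
- exact: is_repmap_restriction.
Qed.
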